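(* Let $f:\mathbb{R}^n\to\mathbb{R}$ be convex, with the constants $L_j$ as in the context. Then for any $j\in\{1,\dots,n\}$ and all $x',x''\in\mathcal F$, \[ f(x'')\le f(x')+\nabla f(x')^T(x''-x')+\frac{L_j}{2}\|x'-x''\|_{\langle j\rangle}^2. \]
   Context: $n\ge2$; $\mathcal F=\{x\in\mathbb{R}^n: e^Tx=b,\ l_i\le x_i\le u_i\}$ with $e$ the all-ones vector, $b\in\mathbb{R}$, $l_i\in\mathbb{R}\cup\{-\infty\}$, $u_i\in\mathbb{R}\cup\{+\infty\}$, $l_i<u_i$. $f$ is continuously differentiable with Lipschitz continuous gradient on $\mathbb{R}^n$. For $i\ne j$, $L_{i,j}>0$ are constants such that for every $x\in\mathbb{R}^n$ and $s,t\in\mathbb{R}$, $|\nabla f(x+s(e_i-e_j))^T(e_i-e_j)-\nabla f(x+t(e_i-e_j))^T(e_i-e_j)|\le L_{i,j}|s-t|$ ($e_i$ the $i$th unit vector); $L_{i,i}=0$; $L_j=\sum_{i=1}^nL_{i,j}$. $\|x\|_{\langle j\rangle}=\sqrt{\sum_{i\ne j}x_i^2}$. *)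

From HB Require Import structures.
From mathcomp Require Import all_boot all_order all_algebra.
From mathcomp Require Import all_classical all_reals all_analysis.
Set Implicit Arguments. Unset Strict Implicit. Unset Printing Implicit Defensive.
Import Order.TTheory GRing.Theory Num.Theory.
Import numFieldNormedType.Exports.
Local Open Scope ring_scope.

Section Defs.
Variables (R : realType) (n : nat).

Definition dotv (x y : 'rV[R]_n) : R := \sum_(k < n) x ord0 k * y ord0 k.

Definition unitv (i : 'I_n) : 'rV[R]_n := \row_(k < n) (k == i)%:R.

Definition onesv : 'rV[R]_n := \row_(k < n) 1.

Definition normj (j : 'I_n) (x : 'rV[R]_n) : R :=
  Num.sqrt (\sum_(i < n | i != j) x ord0 i ^+ 2).

Definition is_gradient (f : 'rV[R]_n -> R) (g : 'rV[R]_n -> 'rV[R]_n) : Prop :=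
  forall x, differentiable f x /\ forall h, 'd f x h = dotv (g x) h.

Definition lipschitz_map (g : 'rV[R]_n -> 'rV[R]_n) : Prop :=
  exists K : R, forall x y, `|g x - g y| <= K * `|x - y|.

Definition convex_fun (f : 'rV[R]_n -> R) : Prop :=
  forall (x y : 'rV[R]_n) (t : R), 0 <= t -> t <= 1 ->
    f (t *: x + (1 - t) *: y) <= t * f x + (1 - t) * f y.

Definition feasible (b : R) (l u : 'I_n -> \bar R) (x : 'rV[R]_n) : Prop :=
  dotv onesv x = b /\
  forall i, (l i <= (x ord0 i)%:E)%E /\ ((x ord0 i)%:E <= u i)%E.

End Defs.

From HB Require Import structures.
From mathcomp Require Import all_boot all_order all_algebra.
From mathcomp Require Import all_classical all_reals all_analysis.
From mathcomp Require Import ring lra.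
Import Order.TTheory GRing.Theory Num.Theory.
Import numFieldNormedType.Exports.
Set Implicit Arguments. Unset Strict Implicit. Unset Printing Implicit Defensive.
Local Open Scope ring_scope.

(* Since e^T x' = e^T x'', the step d = x'' - x' decomposes as
   d = sum_(i <> j) d_i (e_i - e_j); this is all that feasibility is used for.
   With the convex weights lam_i = L_ij / L_j we have
   x'' = sum_(i <> j) lam_i (x' + lam_i^-1 d_i (e_i - e_j)), so by convexity f x''
   is at most the lam-average of the values of f along the lines through x' in
   the directions e_i - e_j.  On each such line the derivative is
   L_ij-Lipschitz, which gives the one-dimensional descent bound with constant
   L_ij; as L_ij / lam_i = L_j, the quadratic terms add up to
   L_j / 2 * sum_(i <> j) d_i^2. *)

Lemma is_derive_line (R : numFieldType) (V W : normedModType R) (f : V -> W)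
    (x w : V) (t : R) :
  differentiable f (x + t *: w) ->
  is_derive t 1 (fun s => f (x + s *: w)) ('d f (x + t *: w) w).
Proof.
move=> df.
have shiftE : (fun h : R => h^-1 *: (((fun s => f (x + s *: w)) \o shift t) (h *: 1)
                                     - f (x + t *: w)))
  = (fun h : R => h^-1 *: ((f \o shift (x + t *: w)) (h *: w) - f (x + t *: w))).
  by apply/funext => h /=; rewrite scaler1 scalerDl addrCA.
have dfw : derivable f (x + t *: w) w by apply: diff_derivable.
by split; [rewrite /derivable shiftE | rewrite /derive shiftE -deriveE].
Qed.

Lemma quadratic_ub_of_derive (R : realType) (phi D : R -> R) (K : R) :
  (forall s : R, is_derive s (1 : R) phi (D s)) ->
  (forall s, 0 <= s <= 1 -> D s - D 0 <= K * s) ->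
  phi 1 <= phi 0 + D 0 + K / 2.
Proof.
move=> dphi DK.
pose psi := phi - (fun s => D 0 * s) - (fun s => K / 2 * s ^+ 2).
have dpsi (s : R) : is_derive s (1 : R) psi (D s - D 0 - K * s).
  by apply: is_derive_eq; rewrite /GRing.scale /= !mulr1; lra.
have [c c01] := MVT ltr01 (fun s _ => dpsi s)
  (derivable_within_continuous (fun s _ => @ex_derive _ _ _ _ _ _ _ (dpsi s))).
rewrite /psi !fctE expr1n expr0n /= !mulr0 !mulr1 subr0 => psi10.
have c0 : 0 <= c by move: c01; rewrite in_itv /= => /andP[/ltW].
have c1 : c <= 1 by move: c01; rewrite in_itv /= => /andP[_ /ltW].
have := DK c; rewrite c0 c1 => /(_ isT); lra.
Qed.

Section RowVectors.
Variables (R : realType) (n : nat).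
Implicit Types (f : 'rV[R]_n -> R) (g : 'rV[R]_n -> 'rV[R]_n).

Lemma dotvDr (a u v : 'rV[R]_n) : dotv a (u + v) = dotv a u + dotv a v.
Proof. by rewrite /dotv -big_split; apply: eq_bigr => k _; rewrite mxE mulrDr. Qed.

Lemma dotvZr (a v : 'rV[R]_n) (c : R) : dotv a (c *: v) = c * dotv a v.
Proof. by rewrite /dotv mulr_sumr; apply: eq_bigr => k _; rewrite mxE mulrCA. Qed.

Lemma dotv0r (a : 'rV[R]_n) : dotv a 0 = 0.
Proof. by rewrite -(scale0r 0) dotvZr mul0r. Qed.

Lemma dotv_sumr (a : 'rV[R]_n) (I : Type) (r : seq I) (P : pred I)
    (F : I -> 'rV[R]_n) :
  dotv a (\sum_(i <- r | P i) F i) = \sum_(i <- r | P i) dotv a (F i).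
Proof. exact: (big_morph _ (dotvDr a) (dotv0r a)). Qed.

Lemma gradient_line_ub f g (x v : 'rV[R]_n) (K : R) : is_gradient f g ->
  (forall s, `|dotv (g (x + s *: v)) v - dotv (g x) v| <= K * `|s|) ->
  forall c, f (x + c *: v) <= f x + c * dotv (g x) v + K / 2 * c ^+ 2.
Proof.
move=> hgrad hK c.
pose D s := dotv (g (x + s *: (c *: v))) (c *: v).
have dphi (s : R) : is_derive s (1 : R) (fun s => f (x + s *: (c *: v))) (D s).
  by have [df dfE] := hgrad (x + s *: (c *: v)); rewrite /D -dfE; apply: is_derive_line.
have := @quadratic_ub_of_derive _ _ _ (K * c ^+ 2) dphi.
rewrite /D scale1r !scale0r !addr0 dotvZr mulrAC; apply=> s /andP[s0 _].
rewrite !dotvZr -mulrBr scalerA.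
apply: le_trans (ler_norm _) _; rewrite normrM.
apply: le_trans (ler_wpM2l (normr_ge0 c) (hK (s * c))) _.
rewrite [leLHS](_ : _ = K * c ^+ 2 * s) //.
by rewrite normrM (ger0_norm s0) -real_normK ?num_real //; ring.
Qed.

Lemma psumr_seq_gt0 (I : eqType) (s : seq I) (lam : I -> R) :
  s != [::] -> {in s, forall i, 0 < lam i} -> 0 < \sum_(i <- s) lam i.
Proof.
case: s => [//|a s] _ lam_gt0; rewrite big_cons ltr_wpDr ?lam_gt0 ?mem_head //.
by rewrite big_seq sumr_ge0 // => i si; rewrite ltW ?lam_gt0 // in_cons si orbT.
Qed.

Lemma convex_fun_jensen f (I : eqType) (s : seq I) (lam : I -> R)
    (z : I -> 'rV[R]_n) :
  convex_fun f -> s != [::] -> {in s, forall i, 0 < lam i} ->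
  f ((\sum_(i <- s) lam i)^-1 *: \sum_(i <- s) lam i *: z i)
  <= (\sum_(i <- s) lam i)^-1 * \sum_(i <- s) lam i * f (z i).
Proof.
move=> hconv; elim: s => [//|a s IH] _ lam_gt0.
have la_gt0 : 0 < lam a by rewrite lam_gt0 ?mem_head.
have {}lam_gt0 : {in s, forall i, 0 < lam i}.
  by move=> i si; rewrite lam_gt0 // in_cons si orbT.
rewrite !big_cons; have [->|s0] := eqVneq s [::].
  by rewrite !big_nil !addr0 scalerA mulrA !mulVf ?gt_eqF // scale1r mul1r.
move: (IH s0 lam_gt0) (psumr_seq_gt0 s0 lam_gt0).
set S := \sum_(i <- s) lam i; set Z := \sum_(i <- s) _; set F := \sum_(i <- s) _.
move=> IHs S_gt0; have aS_gt0 : 0 < lam a + S by rewrite addr_gt0.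
have t0 : 0 <= lam a / (lam a + S) by rewrite divr_ge0 // ltW.
have t1 : lam a / (lam a + S) <= 1 by rewrite ler_pdivrMr // mul1r lerDl ltW.
have wS : S / (lam a + S) * S^-1 = (lam a + S)^-1 by field; rewrite !gt_eqF.
have := hconv (z a) (S^-1 *: Z) _ t0 t1.
rewrite (_ : 1 - _ = S / (lam a + S)); last by field; rewrite gt_eqF.
rewrite scalerA wS mulrC -scalerA -scalerDr => /le_trans; apply.
rewrite mulrDr mulrA [_^-1 * _]mulrC lerD2l.
have := ler_wpM2l (ltW (divr_gt0 S_gt0 aS_gt0)) IHs.
by rewrite mulrA wS.
Qed.

Lemma convex_fun_sum_le f (I : eqType) (s : seq I) (lam : I -> R)
    (x : 'rV[R]_n) (w : I -> 'rV[R]_n) :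
  convex_fun f -> {in s, forall i, 0 < lam i} -> \sum_(i <- s) lam i = 1 ->
  f (x + \sum_(i <- s) w i) <= \sum_(i <- s) lam i * f (x + (lam i)^-1 *: w i).
Proof.
move=> hconv lam_gt0 lam1.
have s0 : s != [::].
  by case: s lam1 lam_gt0 => //; rewrite big_nil => /eqP; rewrite eq_sym oner_eq0.
have combE : \sum_(i <- s) lam i *: (x + (lam i)^-1 *: w i) = x + \sum_(i <- s) w i.
  rewrite big_seq (eq_bigr (fun i => lam i *: x + w i)); last first.
    by move=> i si; rewrite scalerDr scalerA divff ?scale1r // gt_eqF ?lam_gt0.
  by rewrite big_split -scaler_suml -!big_seq lam1 scale1r.
have := convex_fun_jensen (fun i => x + (lam i)^-1 *: w i) hconv s0 lam_gt0.
by rewrite lam1 invr1 scale1r mul1r combE.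
Qed.

Lemma sum0_unitvB_expansion (d : 'rV[R]_n) (j : 'I_n) :
  \sum_(k < n) d ord0 k = 0 ->
  \sum_(i < n | i != j) d ord0 i *: (unitv R i - unitv R j) = d.
Proof.
move=> d_sum0; apply/rowP => k; rewrite summxE.
under eq_bigr => i _ do rewrite !mxE mulrBr.
rewrite sumrB -mulr_suml.
have [->|kj] := eqVneq k j.
  rewrite big1 => [|i ij]; last by rewrite eq_sym (negbTE ij) mulr0.
  by move: d_sum0; rewrite (bigD1 j) //= mulr1 sub0r => /eqP; rewrite addr_eq0 => /eqP.
rewrite mulr0 subr0 (bigD1 k) //= eqxx mulr1 big1 ?addr0 // => i /andP[_ ik].
by rewrite eq_sym (negbTE ik) mulr0.
Qed.

Lemma normj_sqr (j : 'I_n) (x : 'rV[R]_n) :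
  normj j x ^+ 2 = \sum_(i < n | i != j) x ord0 i ^+ 2.
Proof. by rewrite /normj sqr_sqrtr // sumr_ge0 // => i _; rewrite sqr_ge0. Qed.

Lemma normjN (j : 'I_n) (x : 'rV[R]_n) : normj j (- x) = normj j x.
Proof. by rewrite /normj; congr Num.sqrt; apply: eq_bigr => i _; rewrite mxE sqrrN. Qed.

Lemma feasible_sub_sum0 b (l u : 'I_n -> \bar R) (x y : 'rV[R]_n) :
  feasible b l u x -> feasible b l u y -> \sum_(k < n) (y - x) ord0 k = 0.
Proof.
move=> [xb _] [yb _]; rewrite -[RHS](subrr b) -{1}yb -xb /dotv -sumrB.
by apply: eq_bigr => k _; rewrite !mxE !mul1r.
Qed.

End RowVectors.

Section PairwiseDescent.
Variables (R : realType) (n : nat) (f : 'rV[R]_n -> R) (g : 'rV[R]_n -> 'rV[R]_n).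
Hypotheses (hgrad : is_gradient f g) (hconv : convex_fun f).
Variables (j : 'I_n) (L : 'I_n -> R).
Hypothesis L_gt0 : forall i, i != j -> 0 < L i.

Local Notation v i := (unitv R i - unitv R j).

Hypothesis L_lipschitz : forall i, i != j -> forall x s,
  `|dotv (g (x + s *: v i)) (v i) - dotv (g x) (v i)| <= L i * `|s|.

Hypothesis n_gt1 : (1 < n)%N.

Let Lj := \sum_(i < n | i != j) L i.

Lemma offdiag_sum_gt0 : 0 < Lj.
Proof.
have /card_gt1P[i [k [_ _ ik]]] : (1 < #|'I_n|)%N by rewrite card_ord.
have [i0 i0j] : exists i0, i0 != j.
  by case: (eqVneq i j) => [ij|]; [exists k; rewrite -ij eq_sym | exists i].
rewrite /Lj (bigD1 i0) //= ltr_wpDr ?L_gt0 // sumr_ge0 // => m /andP[mj _].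
exact/ltW/L_gt0.
Qed.

Lemma weighted_step_le x i (a : R) : i != j ->
  L i / Lj * f (x + (L i / Lj)^-1 *: (a *: v i))
  <= L i / Lj * f x + a * dotv (g x) (v i) + Lj / 2 * a ^+ 2.
Proof.
move=> ij; have Li_gt0 := L_gt0 ij; have Lj_gt0 := offdiag_sum_gt0.
rewrite scalerA.
apply: le_trans (ler_wpM2l (ltW (divr_gt0 Li_gt0 Lj_gt0))
  (gradient_line_ub hgrad (L_lipschitz ij x) _)) _.
by rewrite le_eqVlt; apply/predU1l; field; rewrite !gt_eqF.
Qed.

Lemma pairwise_descent (x d : 'rV[R]_n) : \sum_(k < n) d ord0 k = 0 ->
  f (x + d) <= f x + dotv (g x) d + Lj / 2 * \sum_(i < n | i != j) d ord0 i ^+ 2.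
Proof.
move=> d_sum0; have Lj_gt0 := offdiag_sum_gt0.
rewrite -{1}(sum0_unitvB_expansion j d_sum0) -big_filter.
apply: le_trans (convex_fun_sum_le (lam := fun i => L i / Lj) x _ hconv _ _) _.
- by move=> i; rewrite mem_filter => /andP[ij _]; rewrite divr_gt0 ?L_gt0.
- by rewrite big_filter -mulr_suml divff ?gt_eqF.
rewrite big_filter.
apply: le_trans (ler_sum _ (fun i ij => weighted_step_le x (d ord0 i) ij)) _.
rewrite !big_split /= -mulr_suml -mulr_suml divff ?gt_eqF // mul1r -mulr_sumr.
under eq_bigr => i _ do rewrite -dotvZr.
by rewrite -dotv_sumr sum0_unitvB_expansion.
Qed.

End PairwiseDescent.

Theorem lemma4 (R : realType) (n : nat) (hn : (2 <= n)%N)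
  (b : R) (l u : 'I_n -> \bar R)
  (hl : forall i, l i != +oo%E) (hu : forall i, u i != -oo%E)
  (hlu : forall i, (l i < u i)%E)
  (f : 'rV[R]_n -> R) (g : 'rV[R]_n -> 'rV[R]_n)
  (hgrad : is_gradient f g) (hgc : continuous g) (hglip : lipschitz_map g)
  (L : 'I_n -> 'I_n -> R)
  (hLpos : forall i j, i != j -> 0 < L i j)
  (hLdiag : forall i, L i i = 0)
  (hLij : forall (i j : 'I_n) (x : 'rV[R]_n) (s t : R), i != j ->
      `| dotv (g (x + s *: (unitv R i - unitv R j))) (unitv R i - unitv R j)
       - dotv (g (x + t *: (unitv R i - unitv R j))) (unitv R i - unitv R j) |
      <= L i j * `|s - t|)
  (hconv : convex_fun f)
  (j : 'I_n) (x' x'' : 'rV[R]_n)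
  (hx' : feasible b l u x') (hx'' : feasible b l u x'') :
  f x'' <= f x' + dotv (g x') (x'' - x')
           + (\sum_(i < n) L i j) / 2 * normj j (x' - x'') ^+ 2.
Proof.
have Lj_offdiag : \sum_(i < n) L i j = \sum_(i < n | i != j) L i j.
  by rewrite (bigD1 j) //= hLdiag add0r.
have L_lipschitz i : i != j -> forall x s,
    `|dotv (g (x + s *: (unitv R i - unitv R j))) (unitv R i - unitv R j)
      - dotv (g x) (unitv R i - unitv R j)| <= L i j * `|s|.
  by move=> ij x s; have := hLij i j x s 0 ij; rewrite scale0r addr0 subr0.
have := pairwise_descent hgrad hconv (fun i => hLpos i j) L_lipschitz hn x'
  (feasible_sub_sum0 hx' hx'').
by rewrite addrC subrK Lj_offdiag -[x' - x'']opprB normjN normj_sqr.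
Qed.
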